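(* Let $r\ge 3$ and let $t\ge 6$ be even. Then there exists a $(r,t,4)$-staircase graph $G$ such that the graph $G-v_\infty$ (obtained by deleting $v_\infty$ and its incident edges) admits a proper edge colouring with $r+1$ colours (edges sharing a vertex receive different colours).
   Context: Staircase graph: Let $r\ge 2$ and $t\ge 2$ be integers, $s=\lfloor (t-1)/2\rfloor$, and $a_0$ a positive integer; if $t$ is odd assume $t\ge 3$. An $(r,t,a_0)$-staircase graph is a finite simple graph $G$ whose vertex set is a disjoint union $\{v_\infty\}\cup V_0\cup V_1\cup\cdots\cup V_s$ such that: $|V_0|=a_0$ and $v_\infty$ is adjacent to every vertex of $V_0$ and to no other vertex; for each $i$ with $0\le i\le s-1$ (if $t$ is even) or $0\le i\le s-2$ (if $t$ is odd), every vertex of $V_i$ has exactly $r$ neighbours in $V_{i+1}$ and every vertex of $V_{i+1}$ has exactly one neighbour in $V_i$; if $t$ is even, every vertex of $V_s$ has exactly $r$ neighbours in $V_s$; if $t$ is odd, every vertex of $V_{s-1}$ has exactly $r$ neighbours in $V_s$ and every vertex of $V_s$ has exactly $r+1$ neighbours in $V_{s-1}$; and there are no other edges. *)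

From mathcomp Require Import all_boot.
Set Implicit Arguments. Unset Strict Implicit. Unset Printing Implicit Defensive.

Definition simple_graph (T : finType) (e : rel T) : Prop :=
  irreflexive e /\ symmetric e.

Definition layer (T : finType) (vinf : T) (lev : T -> nat) (i : nat) : {set T} :=
  [set x | (x != vinf) && (lev x == i)].

Definition nbrs_in (T : finType) (e : rel T) (x : T) (A : {set T}) : nat :=
  #|[set y in A | e x y]|.

Definition stair_s (t : nat) : nat := (t.-1)./2.

Definition is_staircase (r t a0 : nat) (T : finType) (e : rel T)
    (vinf : T) (lev : T -> nat) : Prop :=
  let s := stair_s t in
  let V := layer vinf lev in
  simple_graph e /\
  (* vertex set = {vinf} ⊔ V_0 ⊔ ... ⊔ V_s *)
  (forall x, x != vinf -> lev x <= s) /\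
  #|V 0| = a0 /\
  (forall x, e vinf x = (x \in V 0)) /\
  (forall i, (if ~~ odd t then i + 1 <= s else i + 2 <= s) ->
     (forall x, x \in V i -> nbrs_in e x (V i.+1) = r) /\
     (forall y, y \in V i.+1 -> nbrs_in e y (V i) = 1)) /\
  (if ~~ odd t then
     (forall x, x \in V s -> nbrs_in e x (V s) = r)
   else
     (forall x, x \in V s.-1 -> nbrs_in e x (V s) = r) /\
     (forall y, y \in V s -> nbrs_in e y (V s.-1) = r.+1)) /\
  (forall x y, x != vinf -> y != vinf -> e x y ->
     (lev y == (lev x).+1) || (lev x == (lev y).+1) ||
     [&& ~~ odd t, lev x == s & lev y == s]).

Definition proper_edge_colouring_minus (T : finType) (e : rel T) (vinf : T)
    (k : nat) (c : T -> T -> 'I_k) : Prop :=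
  (forall x y, x != vinf -> y != vinf -> e x y -> c x y = c y x) /\
  (forall x y z, x != vinf -> y != vinf -> z != vinf ->
     e x y -> e x z -> y != z -> c x y != c x z).

From mathcomp Require Import all_boot ssralg zmodp zify.
Set Implicit Arguments. Unset Strict Implicit. Unset Printing Implicit Defensive.

(* Take four disjoint complete r-ary trees of depth s; their roots form V_0
   and their leaves V_s.  Colour tree edges top-down: the r edges from a node
   to its children get the r colours of {0..r} other than the colour of the
   node's own upward edge (r for the roots, whose edge to v_inf is not
   coloured).  If the parent of a leaf has upward colour p, the leaf must
   still receive p and the r - 1 colours different from p and from its own
   upward colour.  Leaves with the same parent number in the four trees form
   a block of 4r leaves (copy j, digit d) on which we put an r-regular graph
   realising exactly these colours: (j, d) is joined to (twin j, d) in colour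
   p, and for every c <> d to (flip c j, 2c - d) in the c-th colour
   other than p; the reflection d -> 2c - d of Z/rZ is an involution. *)

Lemma ltn_digit_append r i q d : q < r ^ i -> d < r -> q * r + d < r ^ i.+1.
Proof.
move=> lt_q lt_d; rewrite expnSr.
have : q.+1 * r <= r ^ i * r by rewrite leq_mul2r lt_q orbT.
lia.
Qed.

Lemma ltn_divn_pow r i m : 0 < r -> m < r ^ i.+1 -> m %/ r < r ^ i.
Proof. by move=> r_gt0 lt_m; rewrite ltn_divLR // -expnSr. Qed.

Lemma nbrs_in_enum (T : finType) (e : rel T) x (A : {set T}) m (f : 'I_m -> T) :
  injective f -> (forall a, f a \in A /\ e x (f a)) ->
  (forall y, y \in A -> e x y -> exists a, y = f a) -> nbrs_in e x A = m.
Proof.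
move=> f_inj f_nbr nbr_f; rewrite /nbrs_in.
have -> : [set y in A | e x y] = f @: setT.
  apply/setP => y; rewrite inE; apply/andP/imsetP => [[yA xy] | [a _ ->]].
    by have [a ->] := nbr_f y yA xy; exists a.
  exact: f_nbr.
by rewrite card_imset // cardsT card_ord.
Qed.

Definition skip (y a : nat) : nat := if a < y then a else a.+1.

Lemma skip_neq y a : skip y a != y.
Proof. rewrite /skip; case: ifP; lia. Qed.

Lemma skip_inj y : injective (skip y).
Proof. move=> a b; rewrite /skip; case: ifP; case: ifP; lia. Qed.

Lemma skip_le n y a : y <= n -> a < n -> skip y a <= n.
Proof. rewrite /skip; case: ifP; lia. Qed.

Definition relabel (n y k : nat) : nat := if k == n then y else skip y k.

Lemma relabel_inj n y : injective (relabel n y).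
Proof.
move=> k k'; rewrite /relabel; case: eqP => [->|_]; case: eqP => [->|_] //.
- by move/esym/eqP; rewrite (negbTE (skip_neq _ _)).
- by move/eqP; rewrite (negbTE (skip_neq _ _)).
- exact: skip_inj.
Qed.

Lemma relabel_le n y k : y <= n -> k <= n -> relabel n y k <= n.
Proof.
rewrite /relabel => le_y le_k; case: eqP => // /eqP ne_k.
by apply: skip_le; rewrite // ltn_neqAle ne_k.
Qed.

Lemma ord_double_inj n (c k : 'I_n) :
  (c + c < n) = (k + k < n) -> (c + c) %% n = (k + k) %% n -> c = k.
Proof.
move=> same_half same_mod; apply: val_inj => /=.
have lt_c := ltn_ord c; have lt_k := ltn_ord k.
case: (ltnP (c + c) n) same_half => lt_cc same_half.
  have lt_kk : k + k < n by rewrite -same_half.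
  by move: same_mod; rewrite !modn_small //; lia.
have le_kk : n <= k + k by rewrite leqNgt -same_half; apply/negP; lia.
move: same_mod.
have -> : c + c = (c + c - n) + n by lia.
have -> : k + k = (k + k - n) + n by lia.
rewrite !modnDr !modn_small; lia.
Qed.

Definition copy := (bool * bool)%type.

Definition twin (j : copy) : copy := (~~ j.1, j.2).

Lemma twin_neq j : j != twin j.
Proof. by case: j => [[] []]. Qed.

Lemma eq_twinC j j' : (j == twin j') = (j' == twin j).
Proof. by case: j j' => [[] []] [[] []]. Qed.

Section Mirror.
Variable n : nat.
Local Notation r := n.+2.

Definition mirror (c a : 'I_r) : 'I_r := ((c : 'Z_r) + c - a)%R.

Lemma mirrorK c : involutive (mirror c).
Proof. by move=> a; rewrite /mirror GRing.subKr. Qed.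

Lemma mirror_eq_center c a : (mirror c a == c) = (a == c).
Proof.
rewrite /mirror GRing.subr_eq (GRing.addrC c a).
by apply/eqP/eqP => [/GRing.addIr | ->].
Qed.

Lemma mirror_center_inj c k a :
  mirror c a = mirror k a -> (c + c < r) = (k + k < r) -> c = k.
Proof.
rewrite /mirror => /GRing.addIr /(congr1 val) same_mod same_half.
exact: ord_double_inj.
Qed.

(* Flipping [j.2] keeps mirror edges apart from loops and twin edges; the
   [j.1] part of [flip] separates [c] from [c + r/2], which have the same
   mirror image. *)
Definition flip (c : 'I_r) (j : copy) : copy :=
  (if c + c < r then j.1 else ~~ j.1, ~~ j.2).

Lemma flipK c : involutive (flip c).
Proof. by case=> a b; rewrite /flip /=; case: (c + c < r); rewrite /= ?negbK. Qed.

Lemma flip_neq j c : j != flip c j.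
Proof. by case: j => a [] /=; rewrite /flip xpair_eqE andbF. Qed.

Lemma flip_neq_twin j c : flip c j != twin j.
Proof. by case: j => a [] /=; rewrite /flip xpair_eqE andbF. Qed.

Lemma flip_half c k j : flip c j = flip k j -> (c + c < r) = (k + k < r).
Proof.
case: j => a b; rewrite /flip => /(congr1 fst) /=.
by case: (c + c < r); case: (k + k < r); case: a.
Qed.

End Mirror.

Section Construction.
Variables n s : nat.
Hypothesis s_gt0 : 0 < s.
Local Notation r := n.+2.

(* [(r ^ s).-1.+1] is [r ^ s], written so that [ord0] inhabits it. *)
Definition node := {p : 'I_s.+1 * 'I_(r ^ s).-1.+1 | p.2 < r ^ p.1}.
Definition node_root : node := exist _ (ord0, ord0) (erefl true).

Definition vertex := (copy * node)%type.
Definition lvl (x : vertex) : nat := (val x.2).1.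
Definition num (x : vertex) : nat := (val x.2).2.
Definition mkvertex (j : copy) (i m : nat) : vertex :=
  (j, insubd node_root (inord i, inord m)).

Lemma lvl_le x : lvl x <= s.
Proof. by rewrite /lvl -ltnS ltn_ord. Qed.

Lemma num_lt x : num x < r ^ lvl x.
Proof. exact: (valP x.2). Qed.

Lemma vertex_eq x y : x.1 = y.1 -> lvl x = lvl y -> num x = num y -> x = y.
Proof.
case: x y => [j p] [j' p'] /= -> eq_i eq_m; congr pair; apply: val_inj.
move: eq_i eq_m; rewrite /lvl /num /=.
by case: (val p) (val p') => [i m] [i' m'] /= /ord_inj -> /ord_inj ->.
Qed.

Lemma mkvertexE j i m : i <= s -> m < r ^ i ->
  [/\ (mkvertex j i m).1 = j, lvl (mkvertex j i m) = i & num (mkvertex j i m) = m].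
Proof.
move=> le_i lt_m.
have lt_m' : m < (r ^ s).-1.+1.
  by rewrite prednK ?expn_gt0 //; apply: leq_trans lt_m _; exact: leq_pexp2l.
have node_im : [pred p : 'I_s.+1 * 'I_(r ^ s).-1.+1 | p.2 < r ^ p.1] (inord i, inord m).
  by rewrite /= !inordK.
by rewrite /lvl /num /mkvertex (insubdK _ node_im) /= !inordK.
Qed.

Definition digit (x : vertex) : 'I_r := Ordinal (@ltn_pmod (num x) r isT).

Lemma num_digit x : num x = num x %/ r * r + digit x.
Proof. exact: divn_eq. Qed.

Definition child (x : vertex) (a : 'I_r) : vertex :=
  mkvertex x.1 (lvl x).+1 (num x * r + a).
Definition parent (x : vertex) : vertex := mkvertex x.1 (lvl x).-1 (num x %/ r).

Lemma childE x a : lvl x < s ->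
  [/\ (child x a).1 = x.1, lvl (child x a) = (lvl x).+1 & num (child x a) = num x * r + a].
Proof. by move=> lt_x; apply: mkvertexE => //; apply: ltn_digit_append; rewrite ?num_lt. Qed.

Lemma parentE x : 0 < lvl x ->
  [/\ (parent x).1 = x.1, lvl (parent x) = (lvl x).-1 & num (parent x) = num x %/ r].
Proof.
move=> x_gt0; apply: mkvertexE; first by have := lvl_le x; lia.
by apply: ltn_divn_pow; rewrite // prednK ?num_lt.
Qed.

Definition leaf (j : copy) (q : nat) (d : 'I_r) : vertex := mkvertex j s (q * r + d).

Lemma leafE j q d : q < r ^ s.-1 ->
  [/\ (leaf j q d).1 = j, lvl (leaf j q d) = s,
      num (leaf j q d) %/ r = q & digit (leaf j q d) = d].
Proof.
move=> lt_q; have lt_qd : q * r + d < r ^ s.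
  by rewrite -(prednK s_gt0); apply: ltn_digit_append.
have [-> -> num_qd] := mkvertexE j (leqnn s) lt_qd.
split=> //; last by apply: val_inj; rewrite /= num_qd modnMDl modn_small.
by rewrite num_qd divnMDl // divn_small // addn0.
Qed.

Lemma leaf_block_lt x : lvl x = s -> num x %/ r < r ^ s.-1.
Proof. by move=> x_s; apply: ltn_divn_pow; rewrite // prednK // -x_s num_lt. Qed.

Definition mirror_step (x y : vertex) (c : 'I_r) : bool :=
  [&& c != digit x, digit y == mirror c (digit x) & y.1 == flip c x.1].

Definition block_adj (x y : vertex) : bool :=
  (num y %/ r == num x %/ r) &&
  ((y.1 == twin x.1) && (digit y == digit x) || [exists c, mirror_step x y c]).

Lemma mirror_stepC x y c : mirror_step x y c = mirror_step y x c.
Proof.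
suff step u v : mirror_step u v c -> mirror_step v u c by apply/idP/idP; apply: step.
case/and3P => ne_c /eqP dv /eqP jv.
by rewrite /mirror_step dv jv mirrorK flipK !eqxx eq_sym mirror_eq_center eq_sym ne_c.
Qed.

Lemma block_adjC x y : block_adj x y = block_adj y x.
Proof.
rewrite /block_adj eq_sym eq_twinC [digit y == _]eq_sym.
by congr (_ && (_ || _)); apply/existsP/existsP => -[c]; exists c; rewrite mirror_stepC.
Qed.

Lemma block_adj_irr x : block_adj x x = false.
Proof.
rewrite /block_adj eqxx (negbTE (twin_neq _)) /=; apply/negbTE/existsP => -[c].
by rewrite /mirror_step (negbTE (flip_neq _ _)) !andbF.
Qed.

(* [None] is the vertex [v_inf]. *)
Definition adj (u v : option vertex) : bool :=
  match u, v with
  | None, None => false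
  | None, Some y => lvl y == 0
  | Some x, None => lvl x == 0
  | Some x, Some y =>
      (x.1 == y.1) && ((lvl y == (lvl x).+1) && (num y %/ r == num x)
                       || (lvl x == (lvl y).+1) && (num x %/ r == num y))
      || [&& lvl x == s, lvl y == s & block_adj x y]
  end.

Lemma adj_sym : symmetric adj.
Proof.
case=> [x|] [y|] //=; rewrite block_adjC eq_sym; congr (_ || _).
  by rewrite orbC.
by rewrite andbCA.
Qed.

Lemma adj_irr : irreflexive adj.
Proof. by case=> [x|] //=; rewrite block_adj_irr !andbF orbF; lia. Qed.

Definition block_nbr (x : vertex) (k : 'I_r) : vertex :=
  if k == digit x then leaf (twin x.1) (num x %/ r) (digit x)
  else leaf (flip k x.1) (num x %/ r) (mirror k (digit x)).

Lemma block_nbrE x k : lvl x = s ->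
  lvl (block_nbr x k) = s /\ num (block_nbr x k) %/ r = num x %/ r.
Proof.
move=> x_s; have lt_q := leaf_block_lt x_s.
rewrite /block_nbr; case: ifP => _.
  by have [_ -> -> _] := leafE (twin x.1) (digit x) lt_q.
by have [_ -> -> _] := leafE (flip k x.1) (mirror k (digit x)) lt_q.
Qed.

Lemma block_adj_nbr x k : lvl x = s -> block_adj x (block_nbr x k).
Proof.
move=> x_s; have lt_q := leaf_block_lt x_s.
rewrite /block_adj (block_nbrE k x_s).2 eqxx /= /block_nbr.
case: ifP => [_ | ne_k].
  by have [-> _ _ ->] := leafE (twin x.1) (digit x) lt_q; rewrite !eqxx.
have [jy _ _ dy] := leafE (flip k x.1) (mirror k (digit x)) lt_q.
by apply/orP; right; apply/existsP; exists k; rewrite /mirror_step jy dy ne_k !eqxx.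
Qed.

Lemma block_adj_nbrP x y : lvl x = s -> lvl y = s -> block_adj x y ->
  exists k, y = block_nbr x k.
Proof.
move=> x_s y_s; have lt_q := leaf_block_lt x_s.
case/andP => /eqP same_q /orP [/andP [/eqP jy /eqP dy] | /existsP [c]].
  exists (digit x); rewrite /block_nbr eqxx.
  have [jl ll ql dl] := leafE (twin x.1) (digit x) lt_q.
  by apply: vertex_eq; rewrite ?jl ?ll // [num y]num_digit [num (leaf _ _ _)]num_digit ql dl dy same_q.
case/and3P => ne_c /eqP dy /eqP jy; exists c; rewrite /block_nbr (negbTE ne_c).
have [jl ll ql dl] := leafE (flip c x.1) (mirror c (digit x)) lt_q.
by apply: vertex_eq; rewrite ?jl ?ll // [num y]num_digit [num (leaf _ _ _)]num_digit ql dl dy same_q.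
Qed.

Lemma adj_cases x y : adj (Some x) (Some y) ->
  [\/ 0 < lvl x /\ y = parent x,
      lvl x < s /\ exists a, y = child x a
    | [/\ lvl x = s, lvl y = s & exists k, y = block_nbr x k]].
Proof.
case/orP => [/andP [/eqP jy] | /and3P [/eqP x_s /eqP y_s xy]]; last first.
  by apply: Or33; split => //; apply: block_adj_nbrP.
case/orP => /andP [/eqP ly /eqP qy].
  have lt_x : lvl x < s by have := lvl_le y; lia.
  apply: Or32; split=> //; exists (digit y).
  have [jc lc nc] := childE (digit y) lt_x.
  by apply: vertex_eq; rewrite ?jc ?lc // nc num_digit qy.
have x_gt0 : 0 < lvl x by lia.
apply: Or31; split=> //.
have [jp lp np] := parentE x_gt0.
by apply: vertex_eq; rewrite ?jp ?lp ?np //; lia.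
Qed.

Definition block_label (x y : vertex) : nat :=
  if y.1 == twin x.1 then r
  else if [pick c | mirror_step x y c] is Some c then val c else 0.

Definition nbr_label (x : vertex) (k : 'I_r) : nat := if k == digit x then r else k.

Lemma block_label_le x y : block_label x y <= r.
Proof. by rewrite /block_label; case: ifP => // _; case: pickP => // c _; exact: ltnW (ltn_ord c). Qed.

Lemma block_labelC x y : block_label x y = block_label y x.
Proof. by rewrite /block_label eq_twinC (eq_pick (mirror_stepC x y)). Qed.

Lemma block_label_nbr x k : lvl x = s -> block_label x (block_nbr x k) = nbr_label x k.
Proof.
move=> x_s; have lt_q := leaf_block_lt x_s.
rewrite /nbr_label /block_nbr; case: ifP => ne_k; rewrite /block_label.
  by have [-> _ _ _] := leafE (twin x.1) (digit x) lt_q; rewrite eqxx.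
have [jy _ _ dy] := leafE (flip k x.1) (mirror k (digit x)) lt_q.
rewrite jy (negbTE (flip_neq_twin _ _)).
case: pickP => [c /and3P [_ /eqP dc /eqP jc] | no_c].
  rewrite dy in dc; rewrite jy in jc.
  by rewrite (mirror_center_inj dc (flip_half jc)).
by have := no_c k; rewrite /mirror_step jy dy ne_k !eqxx.
Qed.

Lemma nbr_label_inj x : injective (nbr_label x).
Proof.
move=> k k'; rewrite /nbr_label; case: eqP => [->|_]; case: eqP => [->|_] //.
- by move=> eq_r; have := ltn_ord k'; rewrite -eq_r ltnn.
- by move=> eq_r; have := ltn_ord k; rewrite eq_r ltnn.
- exact: val_inj.
Qed.

Lemma nbr_label_neq x k : nbr_label x k != digit x.
Proof. by rewrite /nbr_label; case: ifPn => // _; rewrite neq_ltn ltn_ord orbT. Qed.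

Lemma block_nbr_inj x : lvl x = s -> injective (block_nbr x).
Proof.
by move=> x_s k k' eq_k; apply: (@nbr_label_inj x); rewrite -!block_label_nbr // eq_k.
Qed.

Fixpoint up_colour (i m : nat) : nat :=
  if i is i'.+1 then skip (up_colour i' (m %/ r)) (m %% r) else r.

Definition up (x : vertex) : nat := up_colour (lvl x) (num x).

(* Label [r] (twin edges) becomes the parents' upward colour and label
   [k < r] the [k]-th colour different from it; a leaf with digit [d] then
   carries upward colour of label [d] and every other label once in its block. *)
Definition colour (x y : vertex) : nat :=
  if lvl x == lvl y then relabel r (up_colour s.-1 (num x %/ r)) (block_label x y)
  else if lvl x < lvl y then up y else up x.

Lemma up_colour_le i m : up_colour i m <= r.
Proof. by elim: i m => [|i IH] m //=; apply: skip_le; rewrite ?IH ?ltn_pmod. Qed.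

Lemma colour_le x y : colour x y <= r.
Proof.
rewrite /colour; case: ifP => _; last by case: ifP => _; exact: up_colour_le.
by apply: relabel_le; rewrite ?up_colour_le ?block_label_le.
Qed.

Lemma up_child x a : lvl x < s -> up (child x a) = skip (up x) a.
Proof.
move=> lt_x; have [_ lc nc] := childE a lt_x.
by rewrite /up lc nc /= divnMDl // divn_small // addn0 modnMDl modn_small.
Qed.

Lemma up_leaf x : lvl x = s -> up x = relabel r (up_colour s.-1 (num x %/ r)) (digit x).
Proof.
move=> x_s; rewrite /up /relabel x_s -{1}(prednK s_gt0) ifN //.
by rewrite neq_ltn ltn_ord.
Qed.

Lemma colour_parent x : 0 < lvl x -> colour x (parent x) = up x.
Proof.
move=> x_gt0; have [_ lp _] := parentE x_gt0.
by rewrite /colour lp ifN ?ifN; lia.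
Qed.

Lemma colour_child x a : lvl x < s -> colour x (child x a) = skip (up x) a.
Proof.
move=> lt_x; have [_ lc _] := childE a lt_x.
by rewrite /colour lc ltnSn ifN ?up_child //; lia.
Qed.

Lemma colour_block_nbr x k : lvl x = s ->
  colour x (block_nbr x k) = relabel r (up_colour s.-1 (num x %/ r)) (nbr_label x k).
Proof.
move=> x_s; have [ly _] := block_nbrE k x_s.
by rewrite /colour ly x_s eqxx block_label_nbr.
Qed.

Lemma colourC x y : adj (Some x) (Some y) -> colour x y = colour y x.
Proof.
move=> xy; rewrite /colour eq_sym.
case: ifP => [same_lvl|]; last by case: ltngtP.
move: same_lvl; case: (adj_cases xy) => [[x_gt0 ->] | [lt_x [a ->]] | [x_s _ [k ->]]].
- by have [_ -> _] := parentE x_gt0; move/eqP; lia.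
- by have [_ -> _] := childE a lt_x; move/eqP; lia.
- by rewrite (block_nbrE k x_s).2 block_labelC.
Qed.

Lemma colour_proper x y z : adj (Some x) (Some y) -> adj (Some x) (Some z) -> y != z ->
  colour x y != colour x z.
Proof.
move=> xy xz; apply: contra => /eqP same; apply/eqP; move: same.
case: (adj_cases xy) => [[x_gt0 ->] | [lt_x [a ->]] | [x_s _ [k ->]]];
case: (adj_cases xz) => [[x_gt0' ->] | [lt_x' [b ->]] | [x_s' _ [k' ->]]] //.
- by rewrite colour_parent // colour_child // => /eqP; rewrite eq_sym (negbTE (skip_neq _ _)).
- rewrite colour_parent // colour_block_nbr // up_leaf // => /relabel_inj /eqP.
  by rewrite eq_sym (negbTE (nbr_label_neq _ _)).
- by rewrite colour_parent // colour_child // => /eqP; rewrite (negbTE (skip_neq _ _)).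
- by rewrite !colour_child // => /skip_inj /val_inj ->.
- by move: lt_x; rewrite x_s' ltnn.
- rewrite colour_parent // colour_block_nbr // up_leaf // => /relabel_inj /eqP.
  by rewrite (negbTE (nbr_label_neq _ _)).
- by move: lt_x'; rewrite x_s ltnn.
- by rewrite !colour_block_nbr // => /relabel_inj /nbr_label_inj ->.
Qed.

Definition level (u : option vertex) : nat := if u is Some x then lvl x else 0.

Local Notation V := (layer None level).

Lemma in_layer x i : (Some x \in V i) = (lvl x == i).
Proof. by rewrite inE. Qed.

Lemma card_roots : #|V 0| = 4.
Proof.
have -> : V 0 = [set Some (mkvertex j 0 0) | j : copy].
  apply/setP; case=> [y|]; last by rewrite inE; apply/esym/imsetP; case.
  rewrite in_layer; apply/eqP/imsetP => [y0 | [j _ [->]]]; last first.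
    by have [_ -> _] := mkvertexE j (leq0n s) (expn_gt0 r 0).
  exists y.1 => //; congr Some.
  have [j0 l0 n0] := mkvertexE y.1 (leq0n s) (expn_gt0 r 0).
  apply: vertex_eq; rewrite ?j0 ?l0 ?n0 //.
  by have := num_lt y; rewrite y0 expn0; lia.
rewrite card_imset ?card_prod ?card_bool // => j j'.
by move/(congr1 (omap fst)) => [].
Qed.

Lemma nbrs_in_children x : lvl x < s -> nbrs_in adj (Some x) (V (lvl x).+1) = r.
Proof.
move=> lt_x; apply: (@nbrs_in_enum _ _ _ _ r (fun a => Some (child x a))).
- move=> a b /(congr1 (omap num)) [].
  have [_ _ ->] := childE a lt_x; have [_ _ ->] := childE b lt_x.
  by move/addnI/ord_inj.
- move=> a; have [_ lc nc] := childE a lt_x.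
  by rewrite in_layer /= lc nc divnMDl // divn_small // addn0 !eqxx.
- case=> [y|]; rewrite ?in_layer ?inE // => /eqP ly xy.
  case: (adj_cases xy) => [[x_gt0 y_def] | [_ [a ->]] | [x_s _ _]].
  + by have [_ lp _] := parentE x_gt0; move: ly; rewrite y_def lp; lia.
  + by exists a.
  + by move: lt_x; rewrite x_s ltnn.
Qed.

Lemma nbrs_in_parent y : 0 < lvl y -> nbrs_in adj (Some y) (V (lvl y).-1) = 1.
Proof.
move=> y_gt0; have [_ lp np] := parentE y_gt0.
apply: (@nbrs_in_enum _ _ _ _ 1 (fun => Some (parent y))).
- by move=> a b _; rewrite (ord1 a) (ord1 b).
- by move=> _; rewrite in_layer /= lp np prednK // !eqxx orbT.
- case=> [x|]; rewrite ?in_layer ?inE // => /eqP lx yx.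
  case: (adj_cases yx) => [[_ ->] | [lt_y [a x_def]] | [y_s x_s _]].
  + by exists ord0.
  + by have [_ lc _] := childE a lt_y; move: lx; rewrite x_def lc; lia.
  + by move: lx; rewrite x_s y_s; lia.
Qed.

Lemma nbrs_in_block x : lvl x = s -> nbrs_in adj (Some x) (V s) = r.
Proof.
move=> x_s; apply: (@nbrs_in_enum _ _ _ _ r (fun k => Some (block_nbr x k))).
- by move=> k k' [] /(block_nbr_inj x_s).
- move=> k; have [ly _] := block_nbrE k x_s.
  by rewrite in_layer /= ly x_s eqxx block_adj_nbr // orbT.
- case=> [y|]; rewrite ?in_layer ?inE // => /eqP ly xy.
  case: (adj_cases xy) => [[x_gt0 y_def] | [lt_x _] | [_ _ [k ->]]].
  + by have [_ lp _] := parentE x_gt0; move: ly; rewrite y_def lp; lia.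
  + by move: lt_x; rewrite x_s ltnn.
  + by exists k.
Qed.

Lemma adj_lvl x y : adj (Some x) (Some y) ->
  [\/ lvl y = (lvl x).+1, lvl x = (lvl y).+1 | lvl x = s /\ lvl y = s].
Proof.
move=> /adj_cases [[x_gt0 ->] | [lt_x [a ->]] | [x_s y_s _]].
- by have [_ -> _] := parentE x_gt0; apply: Or32; lia.
- by have [_ -> _] := childE a lt_x; apply: Or31.
- by apply: Or33.
Qed.

Lemma staircase_adj t : ~~ odd t -> s = stair_s t -> is_staircase r t 4 adj None level.
Proof.
move=> t_even s_def; rewrite /is_staircase -s_def t_even /=.
split; first by split; [exact: adj_irr | exact: adj_sym].
split; first by case=> [x|] // _; exact: lvl_le.
split; first exact: card_roots.
split; first by case=> [x|]; rewrite ?in_layer ?inE.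
split.
  move=> i lt_i; split.
  - case=> [x|]; rewrite ?in_layer ?inE // => /eqP x_i.
    by rewrite -x_i nbrs_in_children //; lia.
  - case=> [y|]; rewrite ?in_layer ?inE // => /eqP y_i.
    have -> : i = (lvl y).-1 by lia.
    by rewrite nbrs_in_parent //; lia.
split; first by case=> [x|]; rewrite ?in_layer ?inE // => /eqP; exact: nbrs_in_block.
case=> [x|] // [y|] // _ _ /adj_lvl /=.
by case=> [-> | -> | [-> ->]]; rewrite ?eqxx ?orbT.
Qed.

Definition colouring (u v : option vertex) : 'I_r.+1 :=
  if (u, v) is (Some x, Some y) then inord (colour x y) else ord0.

Lemma colouring_proper : proper_edge_colouring_minus adj None colouring.
Proof.
split; first by case=> [x|] // [y|] // _ _ xy; rewrite /colouring colourC.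
case=> [x|] // [y|] // [z|] // _ _ _ xy xz ne_yz.
have ne_yz' : y != z by apply: contra ne_yz => /eqP ->.
apply: contra (colour_proper xy xz ne_yz') => /eqP /(congr1 val).
by rewrite /= !inordK ?ltnS ?colour_le // => ->.
Qed.

End Construction.

Theorem mainTheorem13 (r t : nat) :
  3 <= r -> 6 <= t -> ~~ odd t ->
  exists (T : finType) (e : rel T) (vinf : T) (lev : T -> nat),
    is_staircase r t 4 e vinf lev /\
    exists c : T -> T -> 'I_r.+1, proper_edge_colouring_minus e vinf c.
Proof.
move=> r_ge3 t_ge6 t_even.
have [n ->] : exists n, r = n.+2 by exists (r - 2); lia.
have s_gt0 : 0 < stair_s t by rewrite /stair_s; case: t t_ge6 t_even => [|[|[|t]]].
exists _, (@adj n (stair_s t)), None, (@level n (stair_s t)).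
split; first exact: staircase_adj.
by exists (@colouring n (stair_s t)); apply: colouring_proper.
Qed.
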